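(* Let $n\ge2$ and let $X_1,\dots,X_n$ be unbounded balleans, $X=\prod_{i=1}^nX_i$. (a) If $X$ is normal, then the bornology $\mathcal B_X$ has a linearly ordered base. (b) If each $X_i$ is $\operatorname{cof}$-regular and $\mathcal B_X$ has a linearly ordered base, then $X$ is normal.
   Context: A ballean is a pair $(X,\mathcal E_X)$ where $X$ is a set and $\mathcal E_X$ is a family of subsets of $X\times X$ (entourages) such that: each $E\in\mathcal E_X$ contains the diagonal $\Delta_X$; for any $E,F\in\mathcal E_X$ there is $D\in\mathcal E_X$ with $E\circ F^{-1}\subset D$; and $\bigcup\mathcal E_X=X\times X$. For $E\in\mathcal E_X$, $x\in X$, $A\subset X$: $E[x]=\{y:(x,y)\in E\}$, $E[A]=\bigcup_{a\in A}E[a]$. $B\subset X$ is bounded if $B\subset E[x]$ for some $E\in\mathcal E_X$, $x\in X$; $\mathcal B_X$ is the family of bounded sets (bornology); $X$ is unbounded if $X\notin\mathcal B_X$. Sets $A,B$ are asymptotically disjoint if $E[A]\cap E[B]\in\mathcal B_X$ for all $E\in\mathcal E_X$; $U$ is an asymptotic neighborhood of $A$ if $E[A]\setminus U\in\mathcal B_X$ for all $E$; $X$ is normal if any two asymptotically disjoint sets have disjoint asymptotic neighborhoods. The product $\prod_{i=1}^n X_i$ has entourages $\{((x_i)_i,(y_i)_i):(x_i,y_i)\in E_i\ \forall i\}$ for $E_i\in\mathcal E_{X_i}$. A linearly ordered base of a bornology is a subfamily linearly ordered by inclusion such that each bounded set is contained in a member of it. For a poset $P$, $\operatorname{cof}(P)$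 is the least cardinality of a cofinal subset (equal to $1$ if $P$ has a largest element). A ballean $X$ is $\operatorname{cof}$-regular if $\operatorname{cof}(\mathcal E_X)=\operatorname{cof}(\mathcal B_X)$, where both families are ordered by inclusion. *)

From mathcomp Require Import all_boot.
Set Implicit Arguments. Unset Strict Implicit. Unset Printing Implicit Defensive.

(* A "pre-ballean": a carrier type and a family of entourages (relations on
   the carrier, i.e. subsets of X x X). Subsets are predicates. *)
Record ballean := Ballean {
  car : Type;
  ent : (car -> car -> Prop) -> Prop }.
Arguments ent : clear implicits.

Definition is_ballean (X : ballean) : Prop :=
  (forall E, ent X E -> forall x, E x x) /\
  (forall E F, ent X E -> ent X F ->
     exists D, ent X D /\
       forall x y, (exists z, E x z /\ F y z) -> D x y) /\  (* E o F^-1 ⊆ D *)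
  (forall x y, exists E, ent X E /\ E x y).

Definition ball (X : ballean) (E : car X -> car X -> Prop) (A : car X -> Prop)
  : car X -> Prop := fun y => exists a, A a /\ E a y.

Definition bounded (X : ballean) (B : car X -> Prop) : Prop :=
  exists E x, ent X E /\ forall b, B b -> E x b.

Definition unbounded (X : ballean) : Prop := ~ bounded (fun _ : car X => True).

Definition asym_disjoint (X : ballean) (A B : car X -> Prop) : Prop :=
  forall E, ent X E -> bounded (fun y => ball E A y /\ ball E B y).

Definition asym_nbhd (X : ballean) (U A : car X -> Prop) : Prop :=
  forall E, ent X E -> bounded (fun y => ball E A y /\ ~ U y).

Definition normal (X : ballean) : Prop :=
  forall A B : car X -> Prop, asym_disjoint A B ->
    exists U V : car X -> Prop,
      asym_nbhd U A /\ asym_nbhd V B /\ (forall x, ~ (U x /\ V x)).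

Definition has_linear_base (X : ballean) : Prop :=
  exists L : (car X -> Prop) -> Prop,
    (forall A, L A -> bounded A) /\
    (forall A B, L A -> L B -> (forall x, A x -> B x) \/ (forall x, B x -> A x)) /\
    (forall B, bounded B -> exists A, L A /\ forall x, B x -> A x).

(* Cofinality.  A poset is given by a predicate P on a type T with order le. *)
Definition cofinal (T : Type) (le : T -> T -> Prop) (P C : T -> Prop) : Prop :=
  (forall c, C c -> P c) /\ (forall p, P p -> exists c, C c /\ le p c).

(* C is a cofinal subset of least cardinality: it injects into every cofinal
   subset. *)
Definition min_cofinal (T : Type) (le : T -> T -> Prop) (P C : T -> Prop) : Prop :=
  cofinal le P C /\
  forall C', cofinal le P C' ->
    exists f : {t | C t} -> {t | C' t}, injective f.

Definition cof_eq (T1 T2 : Type) (le1 : T1 -> T1 -> Prop) (P1 : T1 -> Prop)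
  (le2 : T2 -> T2 -> Prop) (P2 : T2 -> Prop) : Prop :=
  exists C1 C2, min_cofinal le1 P1 C1 /\ min_cofinal le2 P2 C2 /\
    exists f : {t | C1 t} -> {t | C2 t}, bijective f.

Definition rel_incl (T : Type) (E F : T -> T -> Prop) : Prop :=
  forall x y, E x y -> F x y.
Definition set_incl (T : Type) (A B : T -> Prop) : Prop :=
  forall x, A x -> B x.

Definition cof_regular (X : ballean) : Prop :=
  cof_eq (@rel_incl (car X)) (ent X) (@set_incl (car X)) (@bounded X).

Definition prod_ballean (n : nat) (Xs : 'I_n -> ballean) : ballean :=
  @Ballean (forall i, car (Xs i))
    (fun R => exists Es : forall i, car (Xs i) -> car (Xs i) -> Prop,
       (forall i, ent (Xs i) (Es i)) /\
       (forall x y, R x y <-> forall i, Es i (x i) (y i))).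

From mathcomp Require Import all_boot.
From mathcomp Require Import boolp wochoice.
Set Implicit Arguments. Unset Strict Implicit. Unset Printing Implicit Defensive.

(* (a) Fix a point and two factors i0 <> i1.  The axis A through the point
   along X_i0 and the hyperplane B through it transversal to X_i0 are
   asymptotically disjoint; let U and V be disjoint asymptotic neighbourhoods
   of A and B.  For an entourage E the shadow on X_i0 of E[A] \ U is bounded,
   and a point of E[A] whose i0-coordinate leaves that shadow can be moved
   along X_i0 to a point outside V.  Well-order the entourages and stop at the
   first initial segment that is not dominated on A (one exists because X_i1
   is unbounded): the unions of the shadows along it increase, and the
   cylinders over them form a linearly ordered base.
   (b) Given a linearly ordered base, a family of bounded sets has unbounded
   union only if a minimal cofinal family of bounded sets of X_i0 injects into
   its index set.  Take the shortest initial segment W of such a well-ordered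
   family with this property.  By cof-regularity the entourages of X have a
   cofinal family indexed by W^n, in which every index has only "small" sets
   of predecessors; removing from each E_w[A] the bounded sets E_w[A] ∩ E_v[B]
   with v below w, and symmetrically for B, gives disjoint asymptotic
   neighbourhoods. *)

Section BalleanFacts.
Variable Y : ballean.
Local Notation T := (car Y).

Lemma bounded_sub (A B : T -> Prop) : bounded B -> set_incl A B -> bounded A.
Proof. by move=> [E [x [hE HB]]] sAB; exists E, x; split=> // b /sAB /HB. Qed.

Hypothesis HY : is_ballean Y.

Lemma ent_refl E : ent Y E -> forall x, E x x.
Proof. by case: HY => h _; apply: h. Qed.

Lemma ent_cover (x y : T) : exists E, ent Y E /\ E x y.
Proof. by case: HY => _ [_ h]; apply: h. Qed.

Lemma ent_transpose E : ent Y E -> exists D, ent Y D /\ forall x y, E x y -> D y x.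
Proof.
move=> hE; case: HY => _ [h _]; have [D [hD HD]] := h E E hE hE.
by exists D; split=> // x y Exy; apply: HD; exists y; split=> //; apply: ent_refl.
Qed.

Lemma ent_comp E F : ent Y E -> ent Y F ->
  exists D, ent Y D /\ forall x y z, E x y -> F y z -> D x z.
Proof.
move=> hE /ent_transpose [G [hG HG]]; case: HY => _ [h _].
have [D [hD HD]] := h E G hE hG.
by exists D; split=> // x y z Exy Fyz; apply: HD; exists y; split=> //; apply: HG.
Qed.

Lemma ent_join E F : ent Y E -> ent Y F ->
  exists D, [/\ ent Y D, rel_incl E D & rel_incl F D].
Proof.
move=> hE hF; have [D [hD HD]] := ent_comp hE hF.
exists D; split=> // x y H.
- by apply: HD H _; apply: ent_refl.
- by apply: HD _ H; apply: ent_refl.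
Qed.

Lemma bounded_at (B : T -> Prop) (y : T) : bounded B ->
  exists E, ent Y E /\ forall b, B b -> E y b.
Proof.
move=> [E [x [hE HB]]]; have [F [hF Fyx]] := ent_cover y x.
have [D [hD HD]] := ent_comp hF hE.
by exists D; split=> // b /HB; apply: HD.
Qed.

Lemma bounded_setU (A B : T -> Prop) : bounded A -> bounded B ->
  bounded (fun x => A x \/ B x).
Proof.
move=> hA [E [x [hE HB]]]; have [F [hF HA]] := bounded_at x hA.
have [D [hD DE DF]] := ent_join hE hF.
by exists D, x; split=> // b [/HA/DF|/HB/DE].
Qed.

Lemma bounded_set0 (y : T) : bounded (fun _ : T => False).
Proof. by have [E [hE _]] := ent_cover y y; exists E, y. Qed.

Lemma bounded_set1 (y : T) : bounded (fun x => x = y).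
Proof.
have [E [hE _]] := ent_cover y y.
by exists E, y; split=> // b ->; apply: ent_refl.
Qed.

End BalleanFacts.

Lemma dep_choice (I : Type) (T : I -> Type) (P : forall i, T i -> Prop) :
  (forall i, exists t, P i t) -> exists f : forall i, T i, forall i, P i (f i).
Proof. by move=> h; exists (fun i => sval (cid (h i))) => i; apply: svalP. Qed.

Lemma sval_inj (T : Type) (P : T -> Prop) : injective (@sval T P).
Proof. by case=> a pa [b pb] /= e; apply: eq_exist. Qed.

Definition proj n (Xs : 'I_n -> ballean) (i : 'I_n) (S : car (prod_ballean Xs) -> Prop) :
  car (Xs i) -> Prop := fun y => exists x, S x /\ x i = y.
Arguments proj {n Xs} i S.

Section Product.
Variables (n : nat) (Xs : 'I_n -> ballean).
Local Notation PX := (prod_ballean Xs).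
Local Notation rel_of i := (car (Xs i) -> car (Xs i) -> Prop).

Definition prod_ent (Es : forall i, rel_of i) : car PX -> car PX -> Prop :=
  fun x y => forall i, Es i (x i) (y i).

Lemma prod_ent_ent Es : (forall i, ent (Xs i) (Es i)) -> ent PX (prod_ent Es).
Proof. by move=> hE; exists Es. Qed.

Lemma prod_entP R :
  ent PX R -> exists Es, (forall i, ent (Xs i) (Es i)) /\ R = prod_ent Es.
Proof.
move=> [Es [hE HR]]; exists Es; split=> //.
by apply/funext => x; apply/funext => y; apply/propext.
Qed.

Lemma bounded_prodP (K : car PX -> Prop) : bounded K <-> forall i, bounded (proj i K).
Proof.
split=> [[R [c [/prod_entP [Es [hE ->]] HK]]] i|hK].
  by exists (Es i), (c i); split=> // _ [x [/HK Kx <-]].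
have centred i : exists Ec : rel_of i * car (Xs i),
    ent (Xs i) Ec.1 /\ forall y, proj i K y -> Ec.1 Ec.2 y.
  by have [E [c hEc]] := hK i; exists (E, c).
have [Ec hEc] := dep_choice centred.
exists (prod_ent (fun i => (Ec i).1)), (fun i => (Ec i).2); split.
  by apply: prod_ent_ent => i; case: (hEc i).
by move=> x Kx i; apply: (hEc i).2; exists x.
Qed.

Hypothesis HX : forall i, is_ballean (Xs i).

Lemma prod_is_ballean : is_ballean PX.
Proof.
split; [|split].
- by move=> _ /prod_entP [Es [hE ->]] x i; apply: ent_refl.
- move=> _ _ /prod_entP [Es [hE ->]] /prod_entP [Fs [hF ->]].
  have [Ds hD] := @dep_choice _ _ (fun i (D : rel_of i) => ent (Xs i) D /\
    forall x y, (exists z, Es i x z /\ Fs i y z) -> D x y)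
    (fun i => (HX i).2.1 _ _ (hE i) (hF i)).
  exists (prod_ent Ds); split; first by apply: prod_ent_ent => i; case: (hD i).
  by move=> x y [z [Exz Fyz]] i; apply: (hD i).2; exists (z i).
- move=> x y; have [Es hE] := @dep_choice _ _ (fun i (E : rel_of i) =>
    ent (Xs i) E /\ E (x i) (y i)) (fun i => ent_cover (HX i) (x i) (y i)).
  exists (prod_ent Es); split; first by apply: prod_ent_ent => i; case: (hE i).
  by move=> i; case: (hE i).
Qed.

Lemma bounded_prod_at (K : car PX -> Prop) (c : car PX) : bounded K ->
  exists Es, (forall i, ent (Xs i) (Es i)) /\ forall x, K x -> prod_ent Es c x.
Proof.
move=> /bounded_prodP hK.
have [Es hE] := @dep_choice _ _ (fun i (E : rel_of i) =>
  ent (Xs i) E /\ forall y, proj i K y -> E (c i) y)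
  (fun i => bounded_at (HX i) (c i) (hK i)).
exists Es; split=> [i|x Kx i]; first by case: (hE i).
by apply: (hE i).2; exists x.
Qed.

End Product.

Section WellOrder.
Variables (T : eqType) (R : rel T).
Hypothesis HR : well_order R.

Lemma wo_min (S : T -> Prop) : (exists x, S x) -> exists m, S m /\ forall s, S s -> R m s.
Proof.
move=> [x Sx]; have ne : nonempty [pred z | `[< S z >]].
  by exists x; rewrite inE; apply/asboolP.
have [m [[Sm lbm] _]] := HR ne; exists m.
split; first by move: Sm; rewrite inE => /asboolP.
by move=> s Ss; apply: lbm; rewrite inE; apply/asboolP.
Qed.

Let wo_chainT : wo_chain R predT. Proof. exact: withinW. Qed.

Lemma wo_total : total R.
Proof. by move=> x y; apply: (wo_chainW wo_chainT). Qed.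

Lemma wo_refl : reflexive R.
Proof. by move=> x; apply: (wo_chain_reflexive wo_chainT). Qed.

Lemma wo_anti : antisymmetric R.
Proof. by move=> x y; apply: (wo_chain_antisymmetric wo_chainT). Qed.

Lemma wo_trans : transitive R.
Proof.
move=> y x z Rxy Ryz.
have [m [Em lbm]] :=
  @wo_min (fun w => [\/ w = x, w = y | w = z]) (ex_intro _ x (Or31 _ _ erefl)).
case: Em => e; subst m.
- by apply: lbm; apply: Or33.
- by rewrite (@wo_anti x y) //; rewrite Rxy; apply: lbm; apply: Or31.
- by rewrite -(@wo_anti y z) //; rewrite Ryz; apply: lbm; apply: Or32.
Qed.

Lemma wo_fin_max (I : finType) (i0 : I) (f : I -> T) : exists j, forall i, R (f i) (f j).
Proof.
suff [j fj] : exists j, forall i, i \in enum I -> R (f i) (f j).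
  by exists j => i; apply: fj; rewrite mem_enum.
elim: (enum I) => [|a s [j fj]]; first by exists i0.
case/orP: (wo_total (f a) (f j)) => [faj|fja].
  by exists j => i; rewrite inE => /orP [/eqP ->|/fj].
exists a => i; rewrite inE => /orP [/eqP ->|/fj fij]; first exact: wo_refl.
exact: wo_trans fij fja.
Qed.

End WellOrder.

Section Cofinality.
Variables (T : Type) (le : T -> T -> Prop) (Q C : T -> Prop).

Lemma min_cofinal_inj I (P : I -> Prop) (f : I -> T) : min_cofinal le Q C ->
  (forall t, P t -> Q (f t)) -> (forall q, Q q -> exists t, P t /\ le q (f t)) ->
  exists g : {c | C c} -> {t | P t}, injective g.
Proof.
move=> [_ minC] Qf cof_f.
pose C' q := exists t, P t /\ q = f t.
have [h hinj] : exists h : {c | C c} -> {q | C' q}, injective h.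
  apply: minC; split=> [_ [t [Pt ->]]|q Qq]; first exact: Qf.
  by have [t [Pt le_qt]] := cof_f q Qq; exists (f t); split=> //; exists t.
pose pre (q : {q | C' q}) : {t | P t} := exist _ _ (proj1 (svalP (cid (svalP q)))).
have pre_inj : injective pre.
  move=> q1 q2 /(congr1 sval) /= e; apply: sval_inj.
  by rewrite /= (proj2 (svalP (cid (svalP q1)))) (proj2 (svalP (cid (svalP q2)))) e.
by exists (pre \o h); apply: inj_comp.
Qed.

Lemma cofinal_reindex I (W : I -> Prop) q0 : Q q0 -> cofinal le Q C ->
  (exists f : {c | C c} -> {w | W w}, injective f) ->
  exists e : I -> T, (forall w, Q (e w)) /\ forall q, Q q -> exists w, W w /\ le q (e w).
Proof.
move=> Qq0 [CQ cofC] [f finj].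
have pick w : exists t, Q t /\ forall c : {c | C c}, sval (f c) = w -> t = sval c.
  case: (pselect (exists c, sval (f c) = w)) => [[c fc]|none].
    exists (sval c); split=> [|c' fc']; first exact: CQ (svalP c).
    by congr sval; apply: finj; apply: sval_inj; rewrite fc fc'.
  by exists q0; split=> // c fc; case: none; exists c.
have [e he] := choice pick; exists e; split=> [w|q Qq]; first by case: (he w).
have [c [Cc le_qc]] := cofC q Qq; exists (sval (f (exist _ c Cc))).
by split; [apply: svalP|rewrite ((he _).2 (exist _ c Cc) erefl)].
Qed.

End Cofinality.

Section LeastBigSegment.
Variables (T : eqType) (R : rel T).
Hypothesis HR : well_order R.
Variables (P : T -> Prop) (big : (T -> Prop) -> Prop).
Hypothesis big_mono : forall S S', set_incl S S' -> big S -> big S'.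

Definition below (t : T) : T -> Prop := fun s => [/\ P s, R s t & s != t].

(* The elements of [P] preceding the least [s] whose predecessors form a big
   set (all of [P] if there is no such [s]). *)
Definition least_big_segment : T -> Prop :=
  fun t => P t /\ forall s, P s -> big (below s) -> R t s /\ t != s.

Lemma big_least_big_segment : big P -> big least_big_segment.
Proof.
move=> bigP; case: (pselect (exists s, P s /\ big (below s))) => [ex|].
  have [s0 [[Ps0 big_s0] min_s0]] := wo_min HR ex.
  apply: big_mono big_s0 => t [Pt Rts0 nts0]; split=> // s Ps big_s.
  have Rs0s := min_s0 s (conj Ps big_s); split; first exact: wo_trans Rts0 Rs0s.
  apply: contraNneq nts0 => ets; rewrite ets in Rts0 *.
  by apply/eqP; apply: (wo_anti HR); rewrite Rts0.
move=> none; apply: big_mono bigP => t Pt; split=> // s Ps big_s.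
by case: none; exists s.
Qed.

Lemma least_big_segment_prefix w :
  (forall S t, P t -> ~ big S -> ~ big (fun s => S s \/ s = t)) ->
  least_big_segment w -> ~ big (fun s => least_big_segment s /\ R s w).
Proof.
move=> big_setU1 [Pw least_w].
have small_w : ~ big (below w) by move=> /(least_w w Pw) [_]; rewrite eqxx.
move=> big_seg; apply: (big_setU1 _ _ Pw small_w); apply: big_mono big_seg.
move=> s [[Ps _] Rsw].
by case: (eqVneq s w) => [->|nsw]; [right|left].
Qed.

End LeastBigSegment.

Section Domination.
Variables (Y : ballean) (A : car Y -> Prop).

Lemma ball_mono E F : rel_incl E F -> set_incl (ball E A) (ball F A).
Proof. by move=> EF x [a [Aa Eax]]; exists a; split=> //; apply: EF. Qed.

Definition dominated (S : (car Y -> car Y -> Prop) -> Prop) : Prop :=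
  exists F, ent Y F /\ forall E, S E -> set_incl (ball E A) (ball F A).

Lemma dominated_sub S S' : set_incl S S' -> dominated S' -> dominated S.
Proof. by move=> SS' [F [hF HF]]; exists F; split=> // E /SS'; apply: HF. Qed.

Hypothesis HY : is_ballean Y.

Lemma dominated_setU1 S E : ent Y E -> dominated S ->
  dominated (fun E' => S E' \/ E' = E).
Proof.
move=> hE [F [hF HF]]; have [D [hD FD ED]] := ent_join HY hF hE.
exists D; split=> // E' [/HF SE|->] x; last exact: ball_mono.
by move=> /SE; apply: ball_mono.
Qed.

End Domination.

Section Small.
Variables (Y : ballean) (HY : is_ballean Y) (y0 : car Y).

Definition small (I : Type) (P : I -> Prop) : Prop :=
  forall m : I -> car Y -> Prop, (forall t, P t -> bounded (m t)) ->
    bounded (fun x => exists t, P t /\ m t x).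

Lemma small_bigcup I J (P : I -> Prop) (Q : I -> J -> Prop) (S : J -> Prop) :
  small P -> (forall t, P t -> small (Q t)) ->
  (forall s, S s -> exists t, P t /\ Q t s) -> small S.
Proof.
move=> smallP smallQ SPQ m hm.
pose mS s x := S s /\ m s x.
have hmS t s : Q t s -> bounded (mS s).
  move=> _; case: (pselect (S s)) => [Ss|nSs].
    by apply: bounded_sub (hm s Ss) _ => x [].
  by apply: bounded_sub (bounded_set0 HY y0) _ => x [].
apply: (bounded_sub (smallP (fun t x => exists s, Q t s /\ mS s x)
  (fun t Pt => smallQ t Pt _ (hmS t)))) => x [s [Ss msx]].
have [t [Pt Qts]] := SPQ s Ss.
by exists t; split=> //; exists s.
Qed.

Lemma small_set1 I (t0 : I) : small (fun t => t = t0).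
Proof. by move=> m hm; apply: bounded_sub (hm t0 erefl) _ => x [t [-> mx]]. Qed.

Lemma small_sub I (P P' : I -> Prop) : small P' -> set_incl P P' -> small P.
Proof.
move=> smallP' PP'; apply: (small_bigcup (Q := fun t s => s = t) smallP').
  by move=> t _; apply: small_set1.
by move=> t Pt; exists t; split=> //; apply: PP'.
Qed.

Lemma small_setU1 I (P : I -> Prop) t0 : small P -> small (fun t => P t \/ t = t0).
Proof.
move=> smallP m hm.
apply: (bounded_sub (bounded_setU HY (smallP m (fun t Pt => hm t (or_introl Pt)))
  (hm t0 (or_intror erefl)))).
by move=> x [t [[Pt|->] mx]]; [left; exists t|right].
Qed.

Lemma small_fun (I : finType) T (P : T -> Prop) :
  small P -> small (fun f : I -> T => forall i, P (f i)).
Proof.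
move=> smallP.
case: (pselect (exists f : I -> T, forall i, P (f i))) => [[f0 _]|none]; last first.
  move=> m _; apply: bounded_sub (bounded_set0 HY y0) _ => x [f [Pf _]].
  by case: none; exists f.
pose agree (s : seq I) (f : I -> T) := fun g : I -> T =>
  (forall i, P (g i)) /\ forall i, i \notin s -> g i = f i.
suff small_agree s f : small (agree s f).
  by apply: small_sub (small_agree (enum I) f0) _ => g Pg; split=> // i; rewrite mem_enum.
elim: s f => [|a s IHs] f.
  apply: (small_sub (@small_set1 _ f)) => g [_ gf].
  by apply: funext => i; apply: gf.
apply: small_bigcup smallP (fun t _ => IHs (fun j => if j == a then t else f j)) _.
move=> g [Pg gf]; exists (g a); split=> //; split=> // i nis.
case: eqP => [->|/eqP nia] //; apply: gf.
by rewrite inE negb_or nis andbT.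
Qed.

End Small.

Section NormalityCriterion.
Variables (Y : ballean) (HY : is_ballean Y).
Variables (J : Type) (index : J -> Prop) (le : J -> J -> Prop).
Variable E : J -> car Y -> car Y -> Prop.
Hypothesis E_ent : forall j, index j -> ent Y (E j).
Hypothesis E_cofinal : forall F, ent Y F -> exists j, index j /\ rel_incl F (E j).

Lemma asym_nbhd_bigcup (A : car Y -> Prop) (g : J -> car Y -> Prop) :
  (forall j, index j -> bounded (g j)) ->
  asym_nbhd (fun x => exists j, [/\ index j, ball (E j) A x & ~ g j x]) A.
Proof.
move=> hg F /E_cofinal [j [ij FE]]; apply: bounded_sub (hg j ij) _ => x [Fx nUx].
by apply: contrapT => ngx; apply: nUx; exists j; split=> //; apply: ball_mono Fx.
Qed.

Hypothesis le_total : forall j k, le j k \/ le k j.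
Hypothesis small_le : forall j, index j -> small Y (fun k => index k /\ le k j).

Lemma normal_of_small_cofinal : normal Y.
Proof.
move=> A B AB.
pose h j k x := ball (E j) A x /\ ball (E k) B x.
have hh j k : index j -> index k -> bounded (h j k).
  move=> ij ik; have [D [hD EjD EkD]] := ent_join HY (E_ent ij) (E_ent ik).
  apply: bounded_sub (AB D hD) _ => x [Ax Bx].
  by split; [apply: ball_mono EjD _ Ax|apply: ball_mono EkD _ Bx].
pose gA j x := exists k, (index k /\ le k j) /\ h j k x.
pose gB k x := exists j, (index j /\ le j k) /\ h j k x.
have hgA j : index j -> bounded (gA j).
  by move=> ij; apply: (@small_le j ij (h j)) => k [ik _]; apply: hh.
have hgB k : index k -> bounded (gB k).
  by move=> ik; apply: (@small_le k ik (h^~ k)) => j [ij _]; apply: hh.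
exists (fun x => exists j, [/\ index j, ball (E j) A x & ~ gA j x]).
exists (fun x => exists k, [/\ index k, ball (E k) B x & ~ gB k x]).
split; [exact: asym_nbhd_bigcup|split; first exact: asym_nbhd_bigcup].
(* The overlap at x is removed from U or from V, as the indices compare. *)
move=> x [[j [ij Ax ngA]] [k [ik Bx ngB]]]; case: (le_total k j) => [kj|jk].
- by apply: ngA; exists k.
- by apply: ngB; exists j.
Qed.

End NormalityCriterion.

Section NormalImpliesLinearBase.
Variables (n : nat) (Xs : 'I_n -> ballean).
Hypothesis HX : forall i, is_ballean (Xs i).
Hypothesis HU : forall i, unbounded (Xs i).
Local Notation PX := (prod_ballean Xs).
Local Notation rel_of i := (car (Xs i) -> car (Xs i) -> Prop).
Variables (i0 : 'I_n) (pt : car PX).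

Definition axis : car PX -> Prop := fun x => forall j, j != i0 -> x j = pt j.
Definition hyperplane : car PX -> Prop := fun x => x i0 = pt i0.

Definition agree_off (x y : car PX) : Prop := forall j, j != i0 -> x j = y j.

Lemma ball_axisP Es x : (forall i, ent (Xs i) (Es i)) ->
  ball (prod_ent Es) axis x <-> forall j, j != i0 -> Es j (pt j) (x j).
Proof.
move=> hE; split=> [[a [Aa Eax]] j nji0|Ex]; first by rewrite -Aa //; apply: Eax.
exists (dfwith pt (x i0)); split=> [j nji0|i]; first by rewrite dfwith_out // eq_sym.
case: (eqVneq i0 i) => [<-|ni0i]; first by rewrite dfwith_in; apply: ent_refl.
by rewrite dfwith_out //; apply: Ex; rewrite eq_sym.
Qed.

Lemma ball_hyperplaneP Es x : (forall i, ent (Xs i) (Es i)) ->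
  ball (prod_ent Es) hyperplane x <-> Es i0 (pt i0) (x i0).
Proof.
move=> hE; split=> [[b [Bb Ebx]]|Ex]; first by rewrite -Bb; apply: Ebx.
exists (dfwith x (pt i0)); split=> [|i]; first exact: dfwith_in.
case: (eqVneq i0 i) => [<-|ni0i]; first by rewrite dfwith_in.
by rewrite dfwith_out //; apply: ent_refl.
Qed.

Lemma ball_axis_agree R x y : ent PX R -> agree_off x y ->
  ball R axis x -> ball R axis y.
Proof.
move=> /prod_entP [Es [hE ->]] xy /(ball_axisP _ hE) Ex.
by apply/(ball_axisP _ hE) => j nji0; rewrite -xy //; apply: Ex.
Qed.

Lemma asym_disjoint_axis_hyperplane : asym_disjoint axis hyperplane.
Proof.
move=> _ /prod_entP [Es [hE ->]]; apply/bounded_prodP => i.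
exists (Es i), (pt i); split=> // _ [x [[Ax Bx] <-]].
move: Ax Bx => /(ball_axisP _ hE) Ax /(ball_hyperplaneP _ hE) Bx.
by case: (eqVneq i i0) => [->|nii0] //; apply: Ax.
Qed.

Lemma not_dominated_axis i1 : i1 != i0 -> ~ dominated axis (ent PX).
Proof.
move=> ni1i0 [_ [/prod_entP [Fs [hF ->]] HF]]; apply: (@HU i1).
exists (Fs i1), (pt i1); split=> // t _.
pose z := dfwith pt t : car PX.
have [Gs hG] := @dep_choice _ _ (fun i (G : rel_of i) => ent (Xs i) G /\ G (pt i) (z i))
  (fun i => ent_cover (HX i) (pt i) (z i)).
have hGs i : ent (Xs i) (Gs i) by case: (hG i).
have /HF : ball (prod_ent Gs) axis z by apply/ball_axisP => // j _; case: (hG j).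
by move=> /(_ (prod_ent_ent hGs)) /(ball_axisP _ hF) /(_ i1 ni1i0); rewrite /z dfwith_in.
Qed.

Section Separation.
Variables U V : car PX -> Prop.
Hypothesis U_nbhd : asym_nbhd U axis.
Hypothesis V_nbhd : asym_nbhd V hyperplane.
Hypothesis UV_disjoint : forall x, ~ (U x /\ V x).

Definition shadow G : car (Xs i0) -> Prop := proj i0 (fun x => ball G axis x /\ ~ U x).

Definition shift_outside_V (r : car (Xs i0) -> Prop) : car PX -> Prop :=
  fun x => exists y, [/\ r (y i0), ~ V y & agree_off x y].

Definition cylinder (r : car (Xs i0) -> Prop) : car PX -> Prop :=
  fun x => r (x i0) /\ shift_outside_V r x.

Lemma bounded_shadow G : ent PX G -> bounded (shadow G).
Proof. by move=> /U_nbhd /bounded_prodP. Qed.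

(* If some [y] in [r] escapes the shadow of [G], moving the [i0]-coordinate of
   a point of [G[axis]] to [y] lands in [U], hence outside [V]. *)
Lemma sub_shadow_or_shift (r : car (Xs i0) -> Prop) G : ent PX G ->
  set_incl r (shadow G) \/ set_incl (ball G axis) (shift_outside_V r).
Proof.
move=> hG; case: (pselect (set_incl r (shadow G))) => [|]; first by left.
move=> /existsNP [y /not_implyP [ry ny]].
right=> x Gx; exists (dfwith x y); split; first by rewrite dfwith_in.
- move=> Vxy; apply: ny; exists (dfwith x y); split; last exact: dfwith_in.
  split; last by move=> Uxy; apply: (UV_disjoint (conj Uxy Vxy)).
  by apply: ball_axis_agree hG _ Gx => j nji0; rewrite dfwith_out // eq_sym.
- by move=> j nji0; rewrite dfwith_out // eq_sym.
Qed.

Lemma bounded_outside_V (r : car (Xs i0) -> Prop) :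
  bounded r -> bounded (fun x : car PX => r (x i0) /\ ~ V x).
Proof.
move=> /(bounded_at (HX i0) (pt i0)) [G [hG HG]].
have [Es hE] := @dep_choice _ _ (fun i (E : rel_of i) => ent (Xs i) E /\ E (pt i) (pt i))
  (fun i => ent_cover (HX i) (pt i) (pt i)).
pose Fs := dfwith Es G : forall i, rel_of i.
have hF i : ent (Xs i) (Fs i).
  by rewrite /Fs; case: dfwithP => // j _; case: (hE j).
apply: bounded_sub (V_nbhd (prod_ent_ent hF)) _ => x [rx nVx]; split=> //.
by apply/ball_hyperplaneP => //; rewrite /Fs dfwith_in; apply: HG.
Qed.

Lemma shift_outside_V_sub_ball (r : car (Xs i0) -> Prop) : bounded r ->
  exists F, ent PX F /\ set_incl (shift_outside_V r) (ball F axis).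
Proof.
move=> /bounded_outside_V /(bounded_prod_at HX pt) [Fs [hF HF]].
exists (prod_ent Fs); split; first exact: prod_ent_ent.
move=> x [y [ry nVy xy]]; apply/ball_axisP => // j nji0.
by rewrite xy //; apply: HF.
Qed.

Lemma bounded_cylinder (r : car (Xs i0) -> Prop) : bounded r -> bounded (cylinder r).
Proof.
move=> br; apply/bounded_prodP => i; case: (eqVneq i i0) => [->|nii0].
  by apply: bounded_sub br _ => _ [x [[rx _] <-]].
have /bounded_prodP /(_ i) bounded_i := bounded_outside_V br.
apply: bounded_sub bounded_i _ => _ [x [[_ [y [ry nVy xy]]] <-]].
by exists y; split=> //; rewrite xy.
Qed.

Lemma shift_outside_V_mono r r' :
  set_incl r r' -> set_incl (shift_outside_V r) (shift_outside_V r').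
Proof. by move=> rr' x [y [ry nVy xy]]; exists y; split=> //; apply: rr'. Qed.

Lemma cylinder_mono r r' : set_incl r r' -> set_incl (cylinder r) (cylinder r').
Proof.
by move=> rr' x [rx shx]; split; [apply: rr'|apply: shift_outside_V_mono shx].
Qed.

Variable i1 : 'I_n.
Hypothesis ni1i0 : i1 != i0.

Local Notation relX := (car PX -> car PX -> Prop).
Let le_ent : rel relX := sval (well_ordering_principle relX).
Let le_ent_wo : well_order le_ent := svalP (well_ordering_principle relX).

Let undominated_mono S S' :
  set_incl S S' -> ~ dominated axis S -> ~ dominated axis S'.
Proof. by move=> SS' nS dS'; apply: nS (dominated_sub SS' dS'). Qed.

Definition initial_ents : relX -> Prop :=
  least_big_segment le_ent (ent PX) (fun S => ~ dominated axis S).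

Lemma not_dominated_initial_ents : ~ dominated axis initial_ents.
Proof.
exact: (big_least_big_segment le_ent_wo undominated_mono (not_dominated_axis ni1i0)).
Qed.

Lemma dominated_initial_ents_prefix E : initial_ents E ->
  dominated axis (fun E' => initial_ents E' /\ le_ent E' E).
Proof.
move=> IE; apply: contrapT; apply: (least_big_segment_prefix undominated_mono _ IE).
move=> S E' hE' nnS nd; apply: nnS => dS; apply: nd.
exact (dominated_setU1 (prod_is_ballean HX) hE' dS).
Qed.

Definition shadow_upto E : car (Xs i0) -> Prop :=
  fun y => exists E', [/\ initial_ents E', le_ent E' E & shadow E' y].

Lemma bounded_shadow_upto E : initial_ents E -> bounded (shadow_upto E).
Proof.
move=> /dominated_initial_ents_prefix [F [hF HF]].
apply: bounded_sub (bounded_shadow hF) _ => _ [E' [IE' le_E'E [x [[Ex nUx] <-]]]].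
by exists x; split=> //; split=> //; apply: HF (conj IE' le_E'E) _ Ex.
Qed.

Lemma shadow_upto_mono E1 E2 :
  le_ent E1 E2 -> set_incl (shadow_upto E1) (shadow_upto E2).
Proof.
move=> le12 y [E' [IE' le' sh]]; exists E'; split=> //.
exact: wo_trans le_ent_wo _ _ _ le' le12.
Qed.

(* Otherwise the entourage given by [shift_outside_V_sub_ball] would dominate
   every initial entourage on the axis. *)
Lemma sub_shadow_upto r :
  bounded r -> exists E, initial_ents E /\ set_incl r (shadow_upto E).
Proof.
move=> br; apply: contrapT => none; apply: not_dominated_initial_ents.
have [F [hF HF]] := shift_outside_V_sub_ball br.
exists F; split=> // E IE x Ex.
case: (sub_shadow_or_shift r IE.1) => [rE|/(_ x Ex)/HF //].
case: none; exists E; split=> // y /rE shy; exists E; split=> //.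
exact: wo_refl.
Qed.

(* Otherwise the shadow of [G] would be all of X_i0. *)
Lemma ball_axis_sub_shift G : ent PX G ->
  exists E, initial_ents E /\ set_incl (ball G axis) (shift_outside_V (shadow_upto E)).
Proof.
move=> hG; apply: contrapT => none; apply: (@HU i0).
apply: bounded_sub (bounded_shadow hG) _ => y _.
have [E [IE yE]] := sub_shadow_upto (bounded_set1 (HX i0) y).
case: (sub_shadow_or_shift (shadow_upto E) hG) => [/(_ y (yE y erefl)) //|GE].
by case: none; exists E.
Qed.

Lemma linear_base_of_separation : has_linear_base PX.
Proof.
exists (fun S => exists E, initial_ents E /\ S = cylinder (shadow_upto E)).
split; [|split].
- by move=> _ [E [IE ->]]; apply/bounded_cylinder/bounded_shadow_upto.
- move=> _ _ [E1 [_ ->]] [E2 [_ ->]].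
  by case/orP: (wo_total le_ent_wo E1 E2) => h; [left|right];
    apply/cylinder_mono/shadow_upto_mono.
move=> K /(bounded_prod_at HX pt) [Es [hE HK]].
have bEs : bounded (Es i0 (pt i0)) by exists (Es i0), (pt i0).
have [E1 [IE1 H1]] := sub_shadow_upto bEs.
have [E2 [IE2 H2]] := ball_axis_sub_shift (prod_ent_ent hE).
have [E [IE [le1 le2]]] : exists E, [/\ initial_ents E, le_ent E1 E & le_ent E2 E].
  by case/orP: (wo_total le_ent_wo E1 E2) => h; [exists E2|exists E1];
    split=> //; apply: wo_refl.
exists (cylinder (shadow_upto E)); split; first by exists E.
move=> x Kx; split; first exact: shadow_upto_mono le1 _ (H1 _ (HK x Kx i0)).
apply: shift_outside_V_mono (shadow_upto_mono le2) _ (H2 _ _).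
by apply/ball_axisP => // j _; apply: HK.
Qed.

End Separation.

Lemma normal_has_linear_base i1 : i1 != i0 -> normal PX -> has_linear_base PX.
Proof.
move=> ni1i0 /(_ _ _ asym_disjoint_axis_hyperplane) [U [V [hU [hV hUV]]]].
exact: (@linear_base_of_separation U V hU hV hUV i1 ni1i0).
Qed.

End NormalImpliesLinearBase.

Section LinearBaseImpliesNormal.
Variables (n : nat) (Xs : 'I_n -> ballean).
Hypothesis HX : forall i, is_ballean (Xs i).
Hypothesis HU : forall i, unbounded (Xs i).
Local Notation PX := (prod_ballean Xs).
Local Notation rel_of i := (car (Xs i) -> car (Xs i) -> Prop).
Local Notation bset i := (car (Xs i) -> Prop).
Variable pt : car PX.
Let HPX := prod_is_ballean HX.

Definition slab i (p : bset i) : car PX -> Prop :=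
  fun x => p (x i) /\ forall j, j != i -> x j = pt j.

Lemma bounded_slab i (p : bset i) : bounded p -> bounded (slab p).
Proof.
move=> bp; apply/bounded_prodP => j; case: (eqVneq j i) => [->|nji].
  by apply: bounded_sub bp _ => _ [x [[px _] <-]].
by apply: bounded_sub (bounded_set1 (HX j) (pt j)) _ => _ [x [[_ /(_ j nji) ->] <-]].
Qed.

Lemma slab_proj i (p : bset i) : set_incl p (proj i (slab p)).
Proof.
move=> y py; exists (dfwith pt y); split; last exact: dfwith_in.
split=> [|j nji]; first by rewrite dfwith_in.
by rewrite dfwith_out // eq_sym.
Qed.

Lemma not_small_cofinal i (D : bset i -> Prop) :
  cofinal (@set_incl _) (@bounded (Xs i)) D -> ~ small PX D.
Proof.
move=> [Dbounded cofD] smallD; apply: (@HU i).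
have /bounded_prodP /(_ i) bunion :=
  smallD (@slab i) (fun d Dd => bounded_slab (Dbounded d Dd)).
apply: bounded_sub bunion _ => y _; have [d [Dd yd]] := cofD _ (bounded_set1 (HX i) y).
have [x [sx <-]] := slab_proj (yd y erefl).
by exists x; split=> //; exists d.
Qed.

Variable L : (car PX -> Prop) -> Prop.
Hypothesis L_bounded : forall A, L A -> bounded A.
Hypothesis L_chain : forall A B, L A -> L B -> set_incl A B \/ set_incl B A.
Hypothesis L_cofinal : forall B, bounded B -> exists A, L A /\ set_incl B A.

(* If no member of the family covers [K], the whole family lies below the
   base element covering [K]. *)
Lemma cofinal_of_not_small I (P : I -> Prop) : ~ small PX P ->
  exists l : I -> car PX -> Prop, (forall t, P t -> bounded (l t)) /\
    forall K, bounded K -> exists t, P t /\ set_incl K (l t).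
Proof.
move=> /existsNP [m /not_implyP [bm nb]].
have base t : exists A, P t -> L A /\ set_incl (m t) A.
  case: (pselect (P t)) => [Pt|nPt]; last by exists (m t).
  by have [A ?] := L_cofinal (bm t Pt); exists A.
have [l hl] := choice base; exists l; split=> [t /hl [/L_bounded] //|K bK].
apply: contrapT => none; have [A [LA KA]] := L_cofinal bK.
apply: nb; apply: bounded_sub (L_bounded LA) _ => x [t [Pt mx]].
have [Llt mlt] := hl t Pt; case: (L_chain Llt LA) => [ltA|Alt]; first by apply/ltA/mlt.
by case: none; exists t; split=> // y /KA /Alt.
Qed.

Lemma min_cofinal_inj_of_not_small i (C : bset i -> Prop) I (P : I -> Prop) :
  min_cofinal (@set_incl _) (@bounded (Xs i)) C -> ~ small PX P ->
  exists f : {c | C c} -> {t | P t}, injective f.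
Proof.
move=> minC /cofinal_of_not_small [l [bl cofl]].
apply: (min_cofinal_inj minC (f := fun t => proj i (l t))) => [t Pt|p bp].
  by have /bounded_prodP := bl t Pt; apply.
have [t [Pt slt]] := cofl _ (bounded_slab bp).
exists t; split=> // y /slab_proj [x [sx <-]]; exists x; split=> //; exact: slt.
Qed.

Hypothesis HC : forall i, cof_regular (Xs i).
Variable i0 : 'I_n.
Variable D : bset i0 -> Prop.
Hypothesis minD : min_cofinal (@set_incl _) (@bounded (Xs i0)) D.

Let le0 : rel (bset i0) := sval (well_ordering_principle _).
Let le0_wo : well_order le0 := svalP (well_ordering_principle _).

Let not_small_mono I (S S' : I -> Prop) : set_incl S S' -> ~ small PX S -> ~ small PX S'.
Proof. by move=> SS' nS sS'; apply: nS (small_sub HPX pt sS' SS'). Qed.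

(* Plays the role of the cardinal cof(B_X_i0): it is not small, its proper
   initial segments are, and it indexes cofinal families of entourages. *)
Definition index_set : bset i0 -> Prop :=
  least_big_segment le0 D (fun S => ~ small PX S).

Lemma not_small_index_set : ~ small PX index_set.
Proof.
apply: (big_least_big_segment le0_wo (@not_small_mono _)).
exact: not_small_cofinal minD.1.
Qed.

Lemma small_index_set_prefix w : index_set w ->
  small PX (fun w' => index_set w' /\ le0 w' w).
Proof.
move=> Iw; apply: contrapT; apply: (least_big_segment_prefix (@not_small_mono _) _ Iw).
by move=> S t _ nnS nsm; apply: nnS => sS; apply: nsm; apply: (small_setU1 HPX).
Qed.

Lemma ent_family i : exists e : bset i0 -> rel_of i,
  (forall w, ent (Xs i) (e w)) /\
  forall F, ent (Xs i) F -> exists w, index_set w /\ rel_incl F (e w).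
Proof.
have [C1 [C2 [minC1 [minC2 [b bb]]]]] := HC i.
have [g g_inj] := min_cofinal_inj_of_not_small minC2 not_small_index_set.
have [E [hE _]] := ent_cover (HX i) (pt i) (pt i).
apply: (cofinal_reindex hE minC1.1).
by exists (g \o b); apply: inj_comp g_inj (bij_inj bb).
Qed.

Lemma normal_of_linear_base : normal PX.
Proof.
have [es hes] := @dep_choice _ _ (fun i (e : bset i0 -> rel_of i) =>
  (forall w, ent (Xs i) (e w)) /\
  forall F, ent (Xs i) F -> exists w, index_set w /\ rel_incl F (e w)) ent_family.
apply: (normal_of_small_cofinal HPX
  (index := fun ws : 'I_n -> bset i0 => forall i, index_set (ws i))
  (le := fun vs ws => forall i, exists j, le0 (vs i) (ws j))
  (E := fun ws => prod_ent (fun i => es i (ws i)))).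
- by move=> ws _; apply: prod_ent_ent => i; apply: (hes i).1.
- move=> _ /prod_entP [Fs [hF ->]].
  have [ws hws] := @dep_choice _ _ (fun i w => index_set w /\ rel_incl (Fs i) (es i w))
    (fun i => (hes i).2 _ (hF i)).
  exists ws; split=> [i|x y Fxy i]; first by case: (hws i).
  by apply: (hws i).2.
- move=> vs ws; case: (pselect (forall i, exists j, le0 (vs i) (ws j))); first by left.
  move=> /existsNP [i /forallNP nle]; right=> j; exists i.
  by case/orP: (wo_total le0_wo (ws j) (vs i)) => // le_vw; case: (nle j).
- move=> ws Iws; have [j maxj] := wo_fin_max le0_wo i0 ws.
  have small_below := small_fun HPX pt (I := 'I_n) (small_index_set_prefix (Iws j)).
  refine (small_sub HPX pt small_below _).
  move=> vs [Ivs le_vs] i; split=> //; have [k le_k] := le_vs i.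
  exact: wo_trans le0_wo _ _ _ le_k (maxj k).
Qed.

End LinearBaseImpliesNormal.

Lemma pointless_ballean (Y : ballean) : (car Y -> False) ->
  has_linear_base Y /\ normal Y.
Proof.
move=> none; split.
  exists (fun _ => False); split; [|split] => // B [E [x _]].
  by case: (none x).
move=> A B AB; exists (fun _ => False), (fun _ => False).
by split; [|split] => // E /(AB E) [F [x _]]; case: (none x).
Qed.

Theorem theorem1p8 (n : nat) (Xs : 'I_n -> ballean) :
  2 <= n ->
  (forall i, is_ballean (Xs i)) ->
  (forall i, unbounded (Xs i)) ->
  (normal (prod_ballean Xs) -> has_linear_base (prod_ballean Xs)) /\
  ((forall i, cof_regular (Xs i)) -> has_linear_base (prod_ballean Xs) ->
     normal (prod_ballean Xs)).
Proof.
move=> n_ge2 HX HU.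
pose i0 : 'I_n := Ordinal (ltnW n_ge2); pose i1 : 'I_n := Ordinal n_ge2.
case: (pselectT (car (prod_ballean Xs))) => [none|pt].
  by have [? ?] := pointless_ballean none.
split; first exact: (@normal_has_linear_base n Xs HX HU i0 pt i1).
move=> HC [L [L_bounded [L_chain L_cofinal]]].
have [_ [D [_ [minD _]]]] := HC i0.
exact: (normal_of_linear_base HX HU pt L_bounded L_chain L_cofinal HC minD).
Qed.
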